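(* Fix $d\ge1$, $N\ge1$, $\alpha\ge2$, powers $P_s,P_r>0$, gains $\xi_{u,v}>0$, and positions $\mathbf{s},\mathbf{1},\dots,\mathbf{N}\in\mathbb{R}^d$ with $\mathbf{s}\neq\mathbf{j}$ for all $j$. For a relay position $\mathbf{r}\in\mathbb{R}^d$ let $\mathsf{SNR}_{u,v}=\xi_{u,v}P_u/\|\mathbf{u}-\mathbf{v}\|^{\alpha}$ for $(u,v)\in\{(s,r),(s,j),(r,j)\}$ (an SNR being $+\infty$ when the distance is $0$). With $\mathsf{C}(x)=\tfrac12\log(1+x)$, $f_j(\rho,\mathbf{r})=\mathsf{SNR}_{s,j}+\mathsf{SNR}_{r,j}+2\rho\sqrt{\mathsf{SNR}_{s,j}\mathsf{SNR}_{r,j}}$, $g_j(\rho,\mathbf{r})=(1-\rho^2)(\mathsf{SNR}_{s,j}+\mathsf{SNR}_{s,r})$ and $$R_{CS}(\rho,\mathbf{r})=\min_{1\le j\le N}\min\big(\mathsf{C}(f_j(\rho,\mathbf{r})),\mathsf{C}(g_j(\rho,\mathbf{r}))\big),$$ $R_{CS}(\rho,\mathbf{r})$ is quasi-concave in $\mathbf{r}\in\mathbb{R}^d$ for every fixed $\rho\in[0,1]$.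
   Context: Setting: real AWGN multicast relay channel (cut-set bound) with source $s$, relay at position $\mathbf{r}$, destinations $1,\dots,N$, path-loss exponent $\alpha$ and channel gains $a_{u,v}=\sqrt{\xi_{u,v}}/\|\mathbf{u}-\mathbf{v}\|^{\alpha/2}$; $\rho$ is the source–relay input correlation coefficient. A function $F$ (possibly taking value $+\infty$) on a convex set is quasi-concave if $F(\lambda x_1+(1-\lambda)x_2)\ge\min(F(x_1),F(x_2))$ for all $x_1,x_2$ and $\lambda\in[0,1]$. *)

From HB Require Import structures.
From mathcomp Require Import all_boot all_order all_algebra.
From mathcomp Require Import all_classical all_reals all_analysis.
Set Implicit Arguments. Unset Strict Implicit. Unset Printing Implicit Defensive.
Import Order.TTheory GRing.Theory Num.Theory.
Local Open Scope ring_scope.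

Definition edist (R : realType) (d : nat) (u v : 'rV[R]_d) : R :=
  Num.sqrt (\sum_(i < d) (u ord0 i - v ord0 i) ^+ 2).

Definition SNR (R : realType) (d : nat) (alpha xi P : R) (u v : 'rV[R]_d) : \bar R :=
  if edist u v == 0 then +oo%E else (xi * P / (edist u v `^ alpha))%:E.

Definition esqrt (R : realType) (x : \bar R) : \bar R :=
  match x with
  | r%:E => (Num.sqrt r)%:E
  | +oo%E => +oo%E
  | -oo%E => 0%E
  end.

Definition Ccap (R : realType) (x : \bar R) : \bar R :=
  match x with
  | r%:E => (ln (1 + r) / 2)%:E
  | +oo%E => +oo%E
  | -oo%E => -oo%E
  end.

Section CutSet.
Local Open Scope ereal_scope.
Variables (R : realType) (d N : nat) (alpha Ps Pr xi_sr : R)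
  (xi_sj xi_rj : 'I_N -> R) (s : 'rV[R]_d) (dst : 'I_N -> 'rV[R]_d).

Definition SNR_sr (r : 'rV[R]_d) := SNR alpha xi_sr Ps s r.
Definition SNR_sj (j : 'I_N) := SNR alpha (xi_sj j) Ps s (dst j).
Definition SNR_rj (r : 'rV[R]_d) (j : 'I_N) := SNR alpha (xi_rj j) Pr r (dst j).

Definition f_j (rho : R) (r : 'rV[R]_d) (j : 'I_N) : \bar R :=
  SNR_sj j + SNR_rj r j + (2 * rho)%:E * esqrt (SNR_sj j * SNR_rj r j).

Definition g_j (rho : R) (r : 'rV[R]_d) (j : 'I_N) : \bar R :=
  (1 - rho ^+ 2)%:E * (SNR_sj j + SNR_sr r).

Definition R_CS (rho : R) (r : 'rV[R]_d) : \bar R :=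
  \big[Order.min/+oo]_(j < N) Order.min (Ccap (f_j rho r j)) (Ccap (g_j rho r j)).
End CutSet.

Definition quasi_concave (R : realType) (d : nat) (F : 'rV[R]_d -> \bar R) : Prop :=
  forall (x1 x2 : 'rV[R]_d) (lam : R), 0 <= lam <= 1 ->
    (Order.min (F x1) (F x2) <= F ((lam *: x1 + (1 - lam) *: x2)%R))%E.

From Pilot Require Import Defs.
From HB Require Import structures.
From mathcomp Require Import all_boot all_order all_algebra.
From mathcomp Require Import all_classical all_reals all_analysis.
From mathcomp Require Import ring lra.
Local Notation edist := Defs.edist. (* MathComp-Analysis also exports an [edist]. *)
Set Implicit Arguments. Unset Strict Implicit.
Import Order.TTheory GRing.Theory Num.Theory.
Local Open Scope ring_scope.

(** Every link SNR involving the relay is a nonincreasing function of one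
    Euclidean distance, ||r - j|| or ||s - r||, and so are the capacities
    [C(f_j)] and [C(g_j)].  A distance to a fixed point is quasi-convex in [r],
    so each of these capacities is quasi-concave in [r], and quasi-concavity
    survives the minimum over the cuts. *)

Section Distance.
Variables (R : realType) (d : nat).

Lemma sqdist_convex (x1 x2 p : 'rV[R]_d) (lam : R) : 0 <= lam <= 1 ->
  \sum_(i < d) ((lam *: x1 + (1 - lam) *: x2) ord0 i - p ord0 i) ^+ 2 <=
  lam * \sum_(i < d) (x1 ord0 i - p ord0 i) ^+ 2 +
  (1 - lam) * \sum_(i < d) (x2 ord0 i - p ord0 i) ^+ 2.
Proof.
move=> /andP[lam_ge0 lam_le1].
rewrite !mulr_sumr -big_split /=; apply: ler_sum => i _; rewrite !mxE.
set a := x1 ord0 i; set b := x2 ord0 i; set c := p ord0 i.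
rewrite -subr_ge0.
have -> : lam * (a - c) ^+ 2 + (1 - lam) * (b - c) ^+ 2 -
  (lam * a + (1 - lam) * b - c) ^+ 2 = lam * (1 - lam) * (a - b) ^+ 2 by ring.
by rewrite mulr_ge0 ?sqr_ge0 // mulr_ge0 // subr_ge0.
Qed.

Lemma edist_convex_le_max (x1 x2 p : 'rV[R]_d) (lam : R) : 0 <= lam <= 1 ->
  edist (lam *: x1 + (1 - lam) *: x2) p <= Order.max (edist x1 p) (edist x2 p).
Proof.
move=> lam01; have := sqdist_convex x1 x2 p lam01.
case/andP: lam01 => lam_ge0 lam_le1.
rewrite /edist; set S := \sum_(i < d) _; set S1 := \sum_(i < d) _.
set S2 := \sum_(i < d) _ => le_S.
have S1_ge0 : 0 <= S1 by rewrite sumr_ge0 // => i _; rewrite sqr_ge0.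
have S2_ge0 : 0 <= S2 by rewrite sumr_ge0 // => i _; rewrite sqr_ge0.
rewrite le_max; apply/orP; have [le12|le21] := leP S1 S2.
- by right; rewrite ler_sqrt //; nra.
- by left; rewrite ler_sqrt //; nra.
Qed.

Lemma edistC (u v : 'rV[R]_d) : edist u v = edist v u.
Proof.
by rewrite /edist; congr Num.sqrt; apply: eq_bigr => i _; rewrite -sqrrN opprB.
Qed.

End Distance.

Section QuasiConcave.
Variables (R : realType) (d : nat).
Local Open Scope ereal_scope.

Lemma quasi_concave_antitone_dist (p : 'rV[R]_d) (F : 'rV[R]_d -> \bar R) :
  (forall x y, (edist x p <= edist y p)%R -> F y <= F x) -> quasi_concave F.
Proof.
move=> F_anti x1 x2 lam lam01.
have := edist_convex_le_max x1 x2 p lam01.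
rewrite le_max => /orP[le1|le2]; [apply: le_trans (F_anti _ _ le1) |
  apply: le_trans (F_anti _ _ le2)]; by rewrite ge_min lexx ?orbT.
Qed.

Lemma quasi_concave_min (F G : 'rV[R]_d -> \bar R) :
  quasi_concave F -> quasi_concave G ->
  quasi_concave (fun x => Order.min (F x) (G x)).
Proof.
move=> qF qG x1 x2 lam lam01; rewrite le_min; apply/andP; split.
- apply: le_trans (qF _ _ _ lam01).
  by rewrite le_min !ge_min !lexx /= ?orbT.
- apply: le_trans (qG _ _ _ lam01).
  by rewrite le_min !ge_min !lexx /= ?orbT.
Qed.

Lemma quasi_concave_bigmin (N : nat) (F : 'I_N -> 'rV[R]_d -> \bar R) :
  (forall j, quasi_concave (F j)) ->
  quasi_concave (fun x => \big[Order.min/+oo]_(j < N) F j x).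
Proof.
move=> qF x1 x2 lam lam01; apply: le_bigmin => [|j _]; first exact: leey.
apply: le_trans (qF j _ _ _ lam01).
by rewrite le_min !ge_min (bigmin_le _ j (F^~ x1)) (bigmin_le _ j (F^~ x2)) orbT.
Qed.

End QuasiConcave.

Section Capacity.
Variable R : realType.
Local Open Scope ereal_scope.

Lemma SNR_ge0 d alpha xi P (u v : 'rV[R]_d) : (0 < xi)%R -> (0 < P)%R ->
  0 <= SNR alpha xi P u v.
Proof.
move=> xi_gt0 P_gt0; rewrite /SNR; case: ifP => // _.
by rewrite lee_fin divr_ge0 ?powR_ge0 // mulr_ge0 // ltW.
Qed.

Lemma SNR_antitone d alpha xi P (u v u' v' : 'rV[R]_d) :
  (0 < xi)%R -> (0 < P)%R -> (0 <= alpha)%R ->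
  (edist u v <= edist u' v')%R -> SNR alpha xi P u' v' <= SNR alpha xi P u v.
Proof.
move=> xi_gt0 P_gt0 alpha_ge0 le_dist; rewrite /SNR.
have [_|uv_neq0] := eqVneq (edist u v) 0%R; first exact: leey.
have uv_gt0 : (0 < edist u v)%R by rewrite lt_def uv_neq0 sqrtr_ge0.
have uv'_gt0 : (0 < edist u' v')%R by apply: lt_le_trans le_dist.
rewrite (gt_eqF uv'_gt0) lee_fin ler_pM2l ?mulr_gt0 //.
by rewrite lef_pV2 ?posrE ?powR_gt0 // ge0_ler_powR // ?nnegrE ltW.
Qed.

Lemma esqrt_ge0 (x : \bar R) : 0 <= esqrt x.
Proof. by case: x => [r| |] //=; rewrite lee_fin sqrtr_ge0. Qed.

Lemma esqrt_le (x y : \bar R) : 0 <= x -> x <= y -> esqrt x <= esqrt y.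
Proof.
case: x => [r| |] //; case: y => [r'| |] //= r_ge0 le_rr'; last exact: leey.
by rewrite !lee_fin in r_ge0 le_rr' *; rewrite ler_sqrt // (le_trans r_ge0).
Qed.

Lemma Ccap_le (x y : \bar R) : 0 <= x -> x <= y -> Ccap x <= Ccap y.
Proof.
case: x => [r| |] //; case: y => [r'| |] //= r_ge0 le_rr'; last exact: leey.
rewrite !lee_fin in r_ge0 le_rr' *.
rewrite ler_pM2r ?invr_gt0 // ler_ln ?posrE ?lerD2l // ltr_pwDl //.
exact: le_trans le_rr'.
Qed.

Lemma coherent_sum_le (a t t' c : \bar R) : 0 <= a -> 0 <= t -> 0 <= c ->
  t <= t' -> a + t + c * esqrt (a * t) <= a + t' + c * esqrt (a * t').
Proof.
move=> a_ge0 t_ge0 c_ge0 le_tt'; rewrite leeD ?leeD2l //.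
by rewrite lee_wpmul2l // esqrt_le ?mule_ge0 ?lee_wpmul2l.
Qed.

End Capacity.

Section CutSetBound.
Local Open Scope ereal_scope.
Variables (R : realType) (d N : nat) (alpha Ps Pr xi_sr : R)
  (xi_sj xi_rj : 'I_N -> R) (s : 'rV[R]_d) (dst : 'I_N -> 'rV[R]_d) (rho : R).
Hypotheses (alpha_ge0 : (0 <= alpha)%R) (Ps_gt0 : (0 < Ps)%R)
  (Pr_gt0 : (0 < Pr)%R) (xi_sr_gt0 : (0 < xi_sr)%R)
  (xi_sj_gt0 : forall j, (0 < xi_sj j)%R) (xi_rj_gt0 : forall j, (0 < xi_rj j)%R)
  (rho01 : (0 <= rho <= 1)%R).

Local Notation f := (f_j alpha Ps Pr xi_sj xi_rj s dst rho).
Local Notation g := (g_j alpha Ps xi_sr xi_sj s dst rho).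

Let coef_f_ge0 : 0 <= (2 * rho)%:E.
Proof. by case/andP: rho01 => rho_ge0 _; rewrite lee_fin mulr_ge0. Qed.

Let coef_g_ge0 : 0 <= (1 - rho ^+ 2)%:E.
Proof. by case/andP: rho01 => rho_ge0 rho_le1; rewrite lee_fin subr_ge0 expr_le1. Qed.

Lemma f_j_ge0 x j : 0 <= f x j.
Proof. by rewrite adde_ge0 ?adde_ge0 ?SNR_ge0 ?mule_ge0 ?esqrt_ge0. Qed.

Lemma f_j_antitone x y j :
  (edist x (dst j) <= edist y (dst j))%R -> f y j <= f x j.
Proof.
move=> le_dist; apply: coherent_sum_le; rewrite ?SNR_ge0 //.
exact: SNR_antitone.
Qed.

Lemma g_j_ge0 x j : 0 <= g x j.
Proof. by rewrite mule_ge0 ?adde_ge0 ?SNR_ge0. Qed.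

Lemma g_j_antitone x y j : (edist x s <= edist y s)%R -> g y j <= g x j.
Proof.
rewrite (edistC x) (edistC y) => le_dist.
apply: lee_wpmul2l => //; apply: leeD => //.
exact: SNR_antitone.
Qed.

Lemma R_CS_quasi_concave :
  quasi_concave (R_CS alpha Ps Pr xi_sr xi_sj xi_rj s dst rho).
Proof.
apply: quasi_concave_bigmin => j; apply: quasi_concave_min.
- apply: (quasi_concave_antitone_dist (p := dst j)) => x y le_dist.
  exact: Ccap_le (f_j_ge0 _ _) (f_j_antitone le_dist).
- apply: (quasi_concave_antitone_dist (p := s)) => x y le_dist.
  exact: Ccap_le (g_j_ge0 _ _) (g_j_antitone _ le_dist).
Qed.

End CutSetBound.

Theorem theorem4 (R : realType) (d N : nat) (alpha Ps Pr xi_sr : R)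
  (xi_sj xi_rj : 'I_N -> R) (s : 'rV[R]_d) (dst : 'I_N -> 'rV[R]_d) :
  (1 <= d)%N -> (1 <= N)%N -> 2 <= alpha -> 0 < Ps -> 0 < Pr -> 0 < xi_sr ->
  (forall j, 0 < xi_sj j) -> (forall j, 0 < xi_rj j) ->
  (forall j, s != dst j) ->
  forall rho : R, 0 <= rho <= 1 ->
    quasi_concave (R_CS alpha Ps Pr xi_sr xi_sj xi_rj s dst rho).
Proof.
move=> _ _ alpha_ge2 Ps_gt0 Pr_gt0 xi_sr_gt0 xi_sj_gt0 xi_rj_gt0 _ rho rho01.
apply: R_CS_quasi_concave => //.
exact: le_trans alpha_ge2.
Qed.
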